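(* Let $U$ be a unicyclic graph and let $e$ be any edge of $\operatorname{Cycles}(U)$. If $\tau$ is a t-switch in the tree $U-e$ between edges $ab,cd$ of $\operatorname{Forest}(U)$, then $e\notin E(\tau(U-e))$.
   Context: Graphs are finite, simple, undirected, labeled. A unicyclic graph is a connected graph with exactly one cycle. For vertices $a,b,c,d$, $A=\binom{a\ b}{c\ d}$ is interchangeable in $G$ if $ab,cd\in E(G)$, $\{a,b\}\cap\{c,d\}=\varnothing$, $ac,bd\notin E(G)$; the 2-switch $\tau_A$ sends $G$ to $G-ab-cd+ac+bd$ if $A$ is interchangeable and to $G$ otherwise (trivial). A 2-switch between edges $ab$ and $cd$ is $\tau_A$ with $A=\binom{a\ b}{c\ d}$. A nontrivial 2-switch $\tau$ over a tree $T$ is a t-switch if $\tau(T)$ is a tree. $\operatorname{Cycles}(G)$ is the subgraph induced by vertices lying on some cycle; $\operatorname{Forest}(G)=G-E(\operatorname{Cycles}(G))$. *)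

(* Simple graphs on the finite labeled vertex set T,
   represented by their edge set: a set of 2-element subsets of T. *)
From mathcomp Require Import all_boot.
Set Implicit Arguments.
Unset Strict Implicit.
Unset Printing Implicit Defensive.

Section Graphs.
Variable T : finType.

Definition graph := {set {set T}}.

Definition simple_graph (E : graph) : Prop := forall x, x \in E -> #|x| = 2.

Definition adj (E : graph) : rel T := fun x y => [set x; y] \in E.

Definition connected (E : graph) : Prop := forall x y, connect (adj E) x y.

Definition is_cycle (E : graph) (s : seq T) : bool :=
  (2 < size s) && ucycleb (adj E) s.

Definition cycle_edges (s : seq T) : graph := [set [set x; next s x] | x in s].

Definition acyclic (E : graph) : Prop := forall s, ~~ is_cycle E s.

Definition is_tree (E : graph) : Prop :=
  simple_graph E /\ connected E /\ acyclic E.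

(* connected, with exactly one cycle (as a subgraph, i.e. up to the choice
   of starting vertex/orientation of the sequence) *)
Definition unicyclic (E : graph) : Prop :=
  simple_graph E /\ connected E /\
  exists C : graph, (exists s, is_cycle E s /\ cycle_edges s = C) /\
                    (forall s, is_cycle E s -> cycle_edges s = C).

Definition on_cycle (E : graph) (v : T) : Prop :=
  exists s, is_cycle E s /\ v \in s.

(* x is an edge of Cycles(E), the subgraph induced by vertices on cycles *)
Definition cycles_edge (E : graph) (x : {set T}) : Prop :=
  x \in E /\ forall v, v \in x -> on_cycle E v.

(* x is an edge of Forest(E) = E - E(Cycles(E)) *)
Definition forest_edge (E : graph) (x : {set T}) : Prop :=
  x \in E /\ ~ cycles_edge E x.

Definition interchangeable (E : graph) (a b c d : T) : bool :=
  [&& [set a; b] \in E, [set c; d] \in E,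
      [disjoint [set a; b] & [set c; d]],
      [set a; c] \notin E & [set b; d] \notin E].

Definition switch2 (E : graph) (a b c d : T) : graph :=
  if interchangeable E a b c d
  then ((E :\ [set a; b]) :\ [set c; d]) :|: [set [set a; c]; [set b; d]]
  else E.

Definition tswitch (E : graph) (a b c d : T) : Prop :=
  is_tree E /\ interchangeable E a b c d /\ is_tree (switch2 E a b c d).

End Graphs.

From mathcomp Require Import all_boot.

Set Implicit Arguments.
Unset Strict Implicit.
Unset Printing Implicit Defensive.

(* If [e] were an edge of the t-switched tree, the cycle of [U] would
   survive: each of its edges is either [e] itself or an edge of [U - e]
   distinct from the forest edges [ab] and [cd], hence untouched by the
   2-switch. *)

Section TwoSwitchCycle.
Variable T : finType.
Implicit Types (E F : graph T) (s : seq T).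

Lemma is_cycle_sub E F s :
  {in s &, forall x y, adj E x y -> adj F x y} -> is_cycle E s -> is_cycle F s.
Proof.
move=> sEF /andP[size_s /andP[cyc_s uniq_s]].
rewrite /is_cycle size_s /ucycleb uniq_s andbT.
by apply: (sub_in_cycle (P := mem s) sEF) cyc_s; apply/allP.
Qed.

Lemma cycle_adj_cycles_edge E s x y :
  is_cycle E s -> x \in s -> y \in s -> adj E x y -> cycles_edge E [set x; y].
Proof.
move=> cyc_s xs ys Exy; split=> // v.
by rewrite !inE => /orP[] /eqP->; exists s.
Qed.

Lemma mem_switch2 E a b c d f :
  interchangeable E a b c d -> f \in E -> f != [set a; b] -> f != [set c; d] ->
  f \in switch2 E a b c d.
Proof. by rewrite /switch2 => -> Ef fab fcd; rewrite !inE fab fcd Ef. Qed.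

Lemma forest_edge_neq E f g : forest_edge E f -> cycles_edge E g -> g != f.
Proof. by move=> [_ not_cyc_f] cyc_g; apply/eqP=> gf; apply: not_cyc_f; rewrite -gf. Qed.

End TwoSwitchCycle.

Theorem lemma2p2 (T : finType) (U : graph T) (e : {set T}) (a b c d : T) :
  unicyclic U -> cycles_edge U e ->
  tswitch (U :\ e) a b c d ->
  forest_edge U [set a; b] -> forest_edge U [set c; d] ->
  e \notin switch2 (U :\ e) a b c d.
Proof.
move=> [_ [_ [_ [[s [cyc_s _]] _]]]] _ [_ [ichg [_ [_ acyc]]]] Fab Fcd.
apply/negP => He; apply: (negP (acyc s)).
apply: (is_cycle_sub _ cyc_s) => x y xs ys Uxy; rewrite /adj.
have [-> //|xy_neq_e] := eqVneq [set x; y] e.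
have cyc_xy := cycle_adj_cycles_edge cyc_s xs ys Uxy.
apply: mem_switch2 => //; first by rewrite !inE xy_neq_e.
- exact: forest_edge_neq Fab cyc_xy.
- exact: forest_edge_neq Fcd cyc_xy.
Qed.
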